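(* Let $G$ be split reductive with root system of type $B_r$, $r\geqslant3$, with simple roots $\alpha_1,\dots,\alpha_r$ in Bourbaki labelling ($\alpha_r$ short), and let $\widetilde G$ be an $n$-fold Brylinski--Deligne cover associated with a Weyl-invariant quadratic form $Q$. Partition $\Phi_+=\Phi_{+,I}\sqcup\Phi_{+,II}\sqcup\Phi_{+,III}$ with $\Phi_{+,I}=\{\sum_{i\leqslant k\leqslant r}\alpha_k:1\leqslant i\leqslant r\}$, $\Phi_{+,II}=\{\sum_{i\leqslant k<j}\alpha_k:1\leqslant i<j\leqslant r\}$, $\Phi_{+,III}=\{\sum_{i\leqslant k<j}\alpha_k+2\sum_{j\leqslant k\leqslant r}\alpha_k:1\leqslant i<j\leqslant r\}$, and $\Phi_+^\vee=\Phi^\vee_{+,I}\sqcup\Phi^\vee_{+,II}\sqcup\Phi^\vee_{+,III}$ with $\Phi^\vee_{+,I}=\{\sum_{i\leqslant k<j}\alpha_k^\vee:1\leqslant i<j\leqslant r\}$, $\Phi^\vee_{+,II}=\{\sum_{i\leqslant k<j}\alpha_k^\vee+2\sum_{j\leqslant k<r}\alpha_k^\vee+\alpha_r^\vee:1\leqslant i<j\leqslant r\}$, $\Phi^\vee_{+,III}=\{2\sum_{i\leqslant k<r}\alpha_k^\vee+\alpha_r^\vee:1\leqslant i\leqslant r\}$. If $n_{\alpha_i}=2n_{\alpha_r}$ for all $1\leqslant i<r$, then $$f_X(\Phi^\vee_{+,I})=f_Y(\Phi_{+,II}),\quad f_X(\Phi^\vee_{+,II})=f_Y(\Phi_{+,III}),\quad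 f_X(\Phi^\vee_{+,III})=f_Y(\Phi_{+,I});$$ in particular $f_X(\Phi^\vee_+)=\frac{1}{2n_{\alpha_r}}[1,2r]=f_Y(\Phi_+)$. If $n_\alpha$ is constant on $\alpha\in\Delta$, then $f_X(\Phi^\vee_+)=\frac{1}{n_\alpha}[1,2r-1]=f_Y(\Phi_+)$.
   Context: $[a,b]$ denotes $\{a,a+1,\dots,b\}$. Notation: $\omega_\alpha$ fundamental weights, $\omega^\vee_\alpha$ fundamental coweights, $\rho^\vee=\sum_{\alpha\in\Delta}\omega_\alpha^\vee$. $B_Q(y,z)=Q(y+z)-Q(y)-Q(z)$, $Y_{Q,n}=\{y\in Y:B_Q(y,z)\in n\mathbf Z\ \forall z\in Y\}$, $n_\alpha=n/\gcd(n,Q(\alpha^\vee))$, and $\tilde n_\alpha\in\{n_\alpha,n_\alpha/2\}$ ($\alpha\in\Phi$) defined by $\mathbf Z\alpha^\vee\cap Y_{Q,n}=\mathbf Z\tilde n_\alpha\alpha^\vee$. $f_X:\Phi_+^\vee\to\mathbf Q$, $f_X(\beta^\vee)=\sum_{\alpha\in\Delta}\langle\omega_\alpha/\tilde n_\alpha,\beta^\vee\rangle$; $f_Y:\Phi_+\to\mathbf Q$, $f_Y(\beta)=\langle\rho^\vee,\beta\rangle/\tilde n_\beta$. *)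

From HB Require Import structures.
From mathcomp Require Import all_boot all_order all_algebra.
From mathcomp Require Import boolp classical_sets.
Set Implicit Arguments. Unset Strict Implicit. Unset Printing Implicit Defensive.
Import Order.TTheory GRing.Theory Num.Theory.
Local Open Scope ring_scope.

(* The cocharacter lattice Y and the character lattice X = Hom(Y,Z) are both
   modelled as Z^m = 'rV[int]_m, with the perfect pairing <x,y> = sum x_k y_k. *)
Definition dpair (m : nat) (x y : 'rV[int]_m) : int := \sum_(k < m) x 0 k * y 0 k.

Definition BQ (m : nat) (Q : 'rV[int]_m -> int) (y z : 'rV[int]_m) : int :=
  Q (y + z) - Q y - Q z.

(* Q : Y -> Z is a quadratic form: Q(ky) = k^2 Q(y) and B_Q is bilinear
   (B_Q is symmetric by definition, so additivity in the first argument suffices). *)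
Definition is_quadratic_form (m : nat) (Q : 'rV[int]_m -> int) : Prop :=
  (forall (k : int) y, Q (k *: y) = k ^+ 2 * Q y) /\
  (forall y z w, BQ Q (y + z) w = BQ Q y w + BQ Q z w).

(* Cartan matrix of type B_r in Bourbaki labelling, indices shifted to 'I_r
   (Bourbaki alpha_{i+1} <-> index i; alpha_r short <-> index r-1):
   cartanB i j = <alpha_j, alpha_i^vee>. *)
Definition cartanB (r : nat) (i j : 'I_r) : int :=
  if i == j then 2
  else if (i == r.-1 :> nat) && (j == r.-2 :> nat) then -2
  else if (i.+1 == j :> nat) || (j.+1 == i :> nat) then -1 else 0.

Definition inYQn (m n : nat) (Q : 'rV[int]_m -> int) (y : 'rV[int]_m) : Prop :=
  forall z : 'rV[int]_m, (n%:Z %| BQ Q y z)%Z.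

Definition nalpha (m n : nat) (Q : 'rV[int]_m -> int) (ac : 'rV[int]_m) : nat :=
  n %/ gcdn n (absz (Q ac)).

Definition ntilde (m n : nat) (Q : 'rV[int]_m -> int) (ac : 'rV[int]_m) : nat :=
  xget 0%N (fun k : nat => (0 < k)%N /\
    forall y : 'rV[int]_m,
      ((exists t : int, y = t *: ac) /\ inYQn n Q y) <->
      (exists t : int, y = (t * k%:Z) *: ac)).

(* Squared root lengths for B_r: (alpha_i,alpha_i) = 2 for long, 1 for short alpha_r. *)
Definition len2 (r : nat) (i : 'I_r) : int := if i == r.-1 :> nat then 1 else 2.

(* 2 (beta,beta) for beta = sum_k c_k alpha_k, using
   (alpha_i,alpha_j) = <alpha_j,alpha_i^vee> (alpha_i,alpha_i)/2. *)
Definition norm2x2 (r : nat) (c : 'I_r -> int) : int :=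
  \sum_(i < r) \sum_(j < r) c i * c j * (cartanB i j * len2 i).

(* Coordinates of the coroot beta^vee = 2 beta/(beta,beta) in the basis of simple
   coroots: d_k = c_k (alpha_k,alpha_k)/(beta,beta). *)
Definition coroot_coord (r : nat) (c : 'I_r -> int) (k : 'I_r) : int :=
  ((2 * c k * len2 k) %/ norm2x2 c)%Z.

Definition corootY (r m : nat) (alphac : 'I_r -> 'rV[int]_m) (c : 'I_r -> int)
  : 'rV[int]_m := \sum_(k < r) coroot_coord c k *: alphac k.

(* f_X(beta^vee) = sum_alpha <omega_alpha/ntilde_alpha, beta^vee>,
   beta^vee = sum_k d_k alpha_k^vee given by its coordinates d. *)
Definition fX (r m n : nat) (alphac : 'I_r -> 'rV[int]_m) (Q : 'rV[int]_m -> int)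
  (d : 'I_r -> int) : rat :=
  \sum_(k < r) (d k)%:~R / (ntilde n Q (alphac k))%:R.

(* f_Y(beta) = <rho^vee, beta>/ntilde_beta, beta = sum_k c_k alpha_k. *)
Definition fY (r m n : nat) (alphac : 'I_r -> 'rV[int]_m) (Q : 'rV[int]_m -> int)
  (c : 'I_r -> int) : rat :=
  (\sum_(k < r) c k)%:~R / (ntilde n Q (corootY alphac c))%:R.

(* Positive roots (coordinates w.r.t. simple roots), 0-based indices. *)
Definition rootI (r : nat) (i : 'I_r) : 'I_r -> int :=
  fun k => (nat_of_bool (i <= k)%N)%:Z.
Definition rootII (r : nat) (i j : 'I_r) : 'I_r -> int :=
  fun k => (nat_of_bool (i <= k < j)%N)%:Z.
Definition rootIII (r : nat) (i j : 'I_r) : 'I_r -> int :=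
  fun k => (nat_of_bool (i <= k < j)%N + 2 * nat_of_bool (j <= k)%N)%:Z.

(* Positive coroots (coordinates w.r.t. simple coroots). *)
Definition corootI (r : nat) (i j : 'I_r) : 'I_r -> int :=
  fun k => (nat_of_bool (i <= k < j)%N)%:Z.
Definition corootII (r : nat) (i j : 'I_r) : 'I_r -> int :=
  fun k => (nat_of_bool (i <= k < j)%N + 2 * nat_of_bool (j <= k < r.-1)%N
            + nat_of_bool (k == r.-1 :> nat))%:Z.
Definition corootIII (r : nat) (i : 'I_r) : 'I_r -> int :=
  fun k => (2 * nat_of_bool (i <= k < r.-1)%N + nat_of_bool (k == r.-1 :> nat))%:Z.

Local Open Scope classical_set_scope.

Definition PhiI (r : nat) : set ('I_r -> int) := [set c | exists i : 'I_r, c = rootI i].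
Definition PhiII (r : nat) : set ('I_r -> int) :=
  [set c | exists i j : 'I_r, (i < j)%N /\ c = rootII i j].
Definition PhiIII (r : nat) : set ('I_r -> int) :=
  [set c | exists i j : 'I_r, (i < j)%N /\ c = rootIII i j].
Definition PhicI (r : nat) : set ('I_r -> int) :=
  [set d | exists i j : 'I_r, (i < j)%N /\ d = corootI i j].
Definition PhicII (r : nat) : set ('I_r -> int) :=
  [set d | exists i j : 'I_r, (i < j)%N /\ d = corootII i j].
Definition PhicIII (r : nat) : set ('I_r -> int) :=
  [set d | exists i : 'I_r, d = corootIII i].

Definition PhiPos (r : nat) := @PhiI r `|` @PhiII r `|` @PhiIII r.
Definition PhicPos (r : nat) := @PhicI r `|` @PhicII r `|` @PhicIII r.
Arguments PhiI : clear implicits. Arguments PhiII : clear implicits. Arguments PhiIII : clear implicits.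
Arguments PhicI : clear implicits. Arguments PhicII : clear implicits. Arguments PhicIII : clear implicits.
Arguments PhiPos : clear implicits. Arguments PhicPos : clear implicits.

Definition scaled_interval (N a b : nat) : set rat :=
  [set q | exists k : nat, (a <= k <= b)%N /\ q = k%:R / N%:R].

From HB Require Import structures.
From mathcomp Require Import all_boot all_order all_algebra.
From mathcomp Require Import boolp classical_sets.
From mathcomp Require Import zify ring.
Import Order.TTheory GRing.Theory Num.Theory.
Set Implicit Arguments. Unset Strict Implicit. Unset Printing Implicit Defensive.
Local Open Scope ring_scope.

(* Weyl invariance of Q under the simple reflections gives
   B_Q(a^vee, z) = Q(a^vee) <a, z> for every simple root a, and comparing
   B_Q(a_i^vee, a_j^vee) with B_Q(a_j^vee, a_i^vee) along the Dynkin diagram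
   shows Q(a_k^vee) (a_k, a_k) = 2 Q(a_1^vee) for all k.  Summing over the
   coordinates of a coroot beta^vee then gives B_Q(beta^vee, z) = M <beta, z>
   with M = 2 Q(a_1^vee) / (beta, beta), and some simple coroot pairs with beta
   to +-1, so ntilde_beta = n / gcd(n, M): it is n_{a_r} for the short roots
   (type I) and n_{a_1} for the long ones (types II, III).  Both f_X and f_Y are
   then explicit, with numerators j - i, 2r - (i + j) and 2(r - i) (shifted by one
   in some places), and the claimed equalities reduce to describing the sets of
   integers these expressions take for 0 <= i < j < r. *)

Section QuadraticForm.
Variable m : nat.
Implicit Types (x y z w : 'rV[int]_m).

Lemma dpairD x y z : dpair x (y + z) = dpair x y + dpair x z.
Proof. by rewrite /dpair -big_split; apply: eq_bigr => k _; rewrite mxE mulrDr. Qed.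

Lemma dpairZ x t y : dpair x (t *: y) = t * dpair x y.
Proof. by rewrite /dpair mulr_sumr; apply: eq_bigr => k _; rewrite mxE mulrCA. Qed.

Lemma dpair0 x : dpair x 0 = 0.
Proof. by rewrite -(scale0r 0) dpairZ mul0r. Qed.

Lemma dpair_sum x s (F : 'I_s -> 'rV[int]_m) :
  dpair x (\sum_(k < s) F k) = \sum_(k < s) dpair x (F k).
Proof. exact: (big_morph (dpair x) (dpairD x) (dpair0 x)). Qed.

Variable Q : 'rV[int]_m -> int.
Hypothesis quadQ : is_quadratic_form Q.

Lemma BQC y z : BQ Q y z = BQ Q z y.
Proof. by rewrite /BQ [y + z]addrC; ring. Qed.

Lemma BQDl y z w : BQ Q (y + z) w = BQ Q y w + BQ Q z w.
Proof. by case: quadQ. Qed.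

Lemma QZ t y : Q (t *: y) = t ^+ 2 * Q y.
Proof. by case: quadQ. Qed.

Lemma BQ0l w : BQ Q 0 w = 0.
Proof. have := BQDl 0 0 w; rewrite addr0; lia. Qed.

Lemma BQZl t y w : BQ Q (t *: y) w = t * BQ Q y w.
Proof.
have BQMnl k : BQ Q (y *+ k) w = BQ Q y w *+ k.
  by elim: k => [|k IHk]; rewrite ?BQ0l // !mulrS BQDl IHk.
have BQNl v : BQ Q (- v) w = - BQ Q v w.
  by have := BQDl v (- v) w; rewrite subrr BQ0l; lia.
case: t => k; first by rewrite -natz scaler_nat BQMnl mulr_natl.
by rewrite NegzE scaleNr mulNr BQNl -natz scaler_nat BQMnl mulr_natl.
Qed.

Lemma BQ_suml s (F : 'I_s -> 'rV[int]_m) w :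
  BQ Q (\sum_(k < s) F k) w = \sum_(k < s) BQ Q (F k) w.
Proof. exact: (big_morph (BQ Q ^~ w) (fun y z => BQDl y z w) (BQ0l w)). Qed.

(* Expanding Q (z - t a^vee) shows t (t Q(a^vee) - B(a^vee, z)) = 0 with
   t = <a, z>; comparing z with z + a^vee, where t grows by 2, kills the
   bracket. *)
Lemma BQ_reflection a ac :
  dpair a ac = 2 -> (forall y, Q (y - dpair a y *: ac) = Q y) ->
  forall z, BQ Q ac z = Q ac * dpair a z.
Proof.
move=> a_ac2 Qrefl.
have vanish z : dpair a z * (dpair a z * Q ac - BQ Q ac z) = 0.
  set t := dpair a z.
  have : Q (z - t *: ac) = BQ Q z ((- t) *: ac) + Q z + Q ((- t) *: ac).
    by rewrite /BQ scaleNr; ring.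
  rewrite Qrefl BQC BQZl QZ sqrrN; lia.
move=> z; have := vanish (z + ac); rewrite dpairD a_ac2 BQC BQDl.
have -> : BQ Q ac ac = 2 * Q ac by rewrite /BQ -mulr2n -scaler_nat QZ; lia.
by rewrite BQC; have := vanish z; nia.
Qed.

End QuadraticForm.

Lemma dvdn_mul_divgcd n a b : (0 < n)%N -> (n %| a * b)%N = (n %/ gcdn n b %| a)%N.
Proof.
move=> n_gt0; set g := gcdn n b.
have g_gt0 : (0 < g)%N by rewrite gcdn_gt0 n_gt0.
have [n' n'E] : exists n', n = (n' * g)%N by exists (n %/ g)%N; rewrite divnK ?dvdn_gcdl.
have [b' b'E] : exists b', b = (b' * g)%N by exists (b %/ g)%N; rewrite divnK ?dvdn_gcdr.
have co_n'b' : coprime n' b'.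
  by rewrite /coprime -(eqn_pmul2r g_gt0) muln_gcdl -n'E -b'E mul1n.
by rewrite n'E b'E mulnA dvdn_pmul2r // Gauss_dvdl // mulnK.
Qed.

Lemma divn_gcdn_gt0 n a : (0 < n)%N -> (0 < n %/ gcdn n a)%N.
Proof. by move=> n_gt0; rewrite divn_gt0 ?gcdn_gt0 ?n_gt0 // dvdn_leq // dvdn_gcdl. Qed.

Lemma scalel_inj m (y : 'rV[int]_m) : y != 0 -> injective ( *:%R^~ y).
Proof.
move=> y_neq0 a b /= /rowP eq_ab.
have [j yj_neq0] : exists j, y 0 j != 0.
  apply/existsP; apply: contraR y_neq0 => /existsPn y0.
  by apply/eqP/rowP => j; rewrite mxE; apply/eqP/negbNE/y0.
by apply: (mulIf yj_neq0); have := eq_ab j; rewrite !mxE.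
Qed.

Section Ntilde.
Variables (m n : nat) (Q : 'rV[int]_m -> int).
Hypotheses (quadQ : is_quadratic_form Q) (n_gt0 : (0 < n)%N).

Lemma ntilde_eq y k : y != 0 -> (0 < k)%N ->
  (forall t : int, inYQn n Q (t *: y) <-> (k%:Z %| t)%Z) -> ntilde n Q y = k.
Proof.
move=> y_neq0 k_gt0 YQn_ty; apply: xget_unique.
  split=> // y'; split=> [[[t ->] /YQn_ty/dvdzP[s ->]] | [t ->]]; first by exists s.
  by split; [exists (t * k) | apply/YQn_ty; rewrite dvdz_mull].
move=> k' [_ k'_gen].
have k_dvd_k' : (k%:Z %| k'%:Z)%Z.
  by apply/YQn_ty; case: (k'_gen (k'%:Z *: y)) => _ /(_ _)[] //; exists 1; rewrite mul1r.
have k'_dvd_k : (k'%:Z %| k%:Z)%Z.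
  have [|t /scalel_inj-> //] := (k'_gen (k%:Z *: y)).1; last exact: dvdz_mull.
  by split; [exists k%:Z | apply/YQn_ty].
move: k_dvd_k' k'_dvd_k; rewrite !dvdzE /= => k_dvd_k' k'_dvd_k.
by apply/eqP; rewrite eqn_dvd k_dvd_k' k'_dvd_k.
Qed.

Lemma ntilde_divgcd y (M : int) : y != 0 ->
  (forall z, (M %| BQ Q y z)%Z) -> (exists z, absz (BQ Q y z) = absz M) ->
  ntilde n Q y = (n %/ gcdn n `|M|)%N.
Proof.
move=> y_neq0 M_dvd [z0 BQz0]; apply: ntilde_eq => //; first exact: divn_gcdn_gt0.
move=> t; rewrite dvdzE -dvdn_mul_divgcd //; split=> [/(_ z0) | tM_dvd z].
  by rewrite BQZl // dvdzE abszM BQz0.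
rewrite BQZl //; have /dvdzP[s ->] := M_dvd z.
by rewrite mulrCA dvdz_mull // dvdzE abszM.
Qed.

End Ntilde.

(* [case_lia] proves linear nat/int goals containing boolean tests (order and
   equality tests, [if]s) by splitting on every test lia cannot settle. *)
Ltac decide_lia b :=
  first [ have -> : b = true by lia | have -> : b = false by lia | case: (boolP b) => ? ].

Ltac ord_bounds :=
  repeat match goal with
  | i : 'I__ |- _ =>
      lazymatch goal with
      | _ : is_true (nat_of_ord i < _)%N |- _ => fail
      | _ => move: (ltn_ord i) => /= ?
      end
  end.

Ltac case_lia :=
  ord_bounds; rewrite /= -?val_eqE /=;
  repeat match goal with
  | |- context [if ?b then _ else _] =>
      lazymatch b with context [if _ then _ else _] => fail | _ => decide_lia b end
  | |- context [(?x <= ?y)%N] => decide_lia (x <= y)%N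
  | |- context [?x == ?y] => lazymatch type of x with nat => decide_lia (x == y) end
  end; rewrite /=; lia.

Lemma sum_delta s (G : nat -> int) x :
  \sum_(k < s) (if k == x :> nat then G k else 0) = if (x < s)%N then G x else 0.
Proof.
elim: s => [|s IHs]; first by rewrite big_ord0.
rewrite big_ord_recr IHs /=.
have [->|x_neq_s] := eqVneq x s; first by rewrite ltnn ltnSn add0r.
by rewrite addr0 ltnS (leq_eqVlt x s) (negbTE x_neq_s).
Qed.

Lemma sum_indicator s x y : (x <= y <= s)%N ->
  \sum_(k < s) (x <= k < y)%N%:Z = (y - x)%N%:Z.
Proof.
case/andP=> xy ys; suff -> : \sum_(k < s) (x <= k < y)%N%:Z = (minn y s)%:Z - (minn x s)%:Z.
  by lia.
elim: s {ys} => [|s IHs]; first by rewrite big_ord0; lia.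
by rewrite big_ord_recr IHs; case_lia.
Qed.

Section CartanB.
Variable p : nat.
Local Notation r := p.+3.

Lemma cartanB_sym (i j : 'I_r) : len2 i * cartanB i j = len2 j * cartanB j i.
Proof. by rewrite /len2 /cartanB; case_lia. Qed.

Lemma cartanB_diag (i : 'I_r) : cartanB i i = 2.
Proof. by rewrite /cartanB eqxx. Qed.

Lemma exists_cartanB_N1 (k : 'I_r) : exists a : 'I_r, cartanB a k = -1.
Proof.
exists (inord (if k == 0 :> nat then 1 else k.-1)).
by rewrite /cartanB -?val_eqE /= inordK; case_lia.
Qed.

(* <sum_k F k alpha_k, alpha_a^vee>, read off row [a] of the Cartan matrix. *)
Definition simple_coroot_pairing (F : nat -> int) (a : nat) : int :=
  2 * F a - (if (0 < a)%N then (if a == r.-1 then 2 else 1) * F a.-1 else 0)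
    - (if (a.+1 < r)%N then F a.+1 else 0).

Lemma sum_cartanB (F : nat -> int) (a : 'I_r) :
  \sum_(k < r) F k * cartanB a k = simple_coroot_pairing F a.
Proof.
have cartanB_deltas (k : 'I_r) : F k * cartanB a k =
    (if k == a :> nat then 2 * F k else 0)
  - (if k == a.-1 :> nat
     then (if (0 < a)%N then (if a == r.-1 :> nat then 2 else 1) * F k else 0) else 0)
  - (if k == a.+1 :> nat then F k else 0).
  by rewrite /cartanB; case_lia.
rewrite (eq_bigr _ (fun k _ => cartanB_deltas k)) !sumrB (sum_delta _ (fun k => 2 * F k)).
rewrite (sum_delta _ (fun k => if (0 < a)%N then (if a == r.-1 :> nat then 2 else 1) * F k else 0)).
rewrite sum_delta.
by rewrite /simple_coroot_pairing; case_lia.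
Qed.

Lemma norm2x2E (F : nat -> int) :
  norm2x2 (fun k : 'I_r => F k) = \sum_(a < r) F a * len2 a * simple_coroot_pairing F a.
Proof.
apply: eq_bigr => a _; rewrite -sum_cartanB mulr_sumr.
by apply: eq_bigr => k _; ring.
Qed.

Lemma norm2x2_rootI (i : 'I_r) : norm2x2 (rootI i) = 2.
Proof.
rewrite (norm2x2E (fun k => (i <= k)%N%:Z)).
rewrite (eq_bigr (fun a : 'I_r => if a == i :> nat then 2 else 0)); last first.
  by move=> a _; rewrite /len2 /simple_coroot_pairing; case_lia.
by rewrite (sum_delta _ (fun _ => 2)) ltn_ord.
Qed.

Lemma norm2x2_rootII (i j : 'I_r) : (i < j)%N -> norm2x2 (rootII i j) = 4.
Proof.
move=> ij; rewrite (norm2x2E (fun k => (i <= k < j)%N%:Z)).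
rewrite (eq_bigr (fun a : 'I_r => (if a == i :> nat then (if i.+1 == j then 4 else 2) else 0)
                               + (if a == j.-1 :> nat then (if i.+1 == j then 0 else 2) else 0)));
  last by move=> a _; rewrite /len2 /simple_coroot_pairing; case_lia.
rewrite big_split /= (sum_delta _ (fun _ => if i.+1 == j then 4 else 2)).
by rewrite (sum_delta _ (fun _ => if i.+1 == j then 0 else 2)); case_lia.
Qed.

Lemma norm2x2_rootIII (i j : 'I_r) : (i < j)%N -> norm2x2 (rootIII i j) = 4.
Proof.
move=> ij; rewrite (norm2x2E (fun k => ((i <= k < j)%N + 2 * (j <= k)%N)%N%:Z)).
rewrite (eq_bigr (fun a : 'I_r => (if a == i :> nat then (if i.+1 == j then 0 else 2) else 0)
            + (if a == j.-1 :> nat then (if i.+1 == j then 0 else -2) else 0)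
            + (if a == j :> nat then 4 else 0)));
  last by move=> a _; rewrite /len2 /simple_coroot_pairing; case_lia.
rewrite !big_split /= (sum_delta _ (fun _ => if i.+1 == j then 0 else 2)).
rewrite (sum_delta _ (fun _ => if i.+1 == j then 0 else -2)).
by rewrite (sum_delta _ (fun _ => 4)); case_lia.
Qed.

Lemma coroot_rootI (i k : 'I_r) :
  2 * rootI i k * len2 k = norm2x2 (rootI i) * corootIII i k.
Proof. by rewrite norm2x2_rootI /rootI /corootIII /len2; case_lia. Qed.

Lemma coroot_rootII (i j k : 'I_r) : (i < j)%N ->
  2 * rootII i j k * len2 k = norm2x2 (rootII i j) * corootI i j k.
Proof. by move=> ij; rewrite norm2x2_rootII // /rootII /corootI /len2; case_lia. Qed.

Lemma coroot_rootIII (i j k : 'I_r) : (i < j)%N ->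
  2 * rootIII i j k * len2 k = norm2x2 (rootIII i j) * corootII i j k.
Proof. by move=> ij; rewrite norm2x2_rootIII // /rootIII /corootII /len2; case_lia. Qed.

Lemma unit_pairing_rootI (i : 'I_r) :
  exists a : 'I_r, `|\sum_(k < r) rootI i k * cartanB a k| = 1.
Proof.
exists (inord i.-1); rewrite (sum_cartanB (fun k => (i <= k)%N%:Z)).
by rewrite /simple_coroot_pairing inordK; case_lia.
Qed.

Lemma unit_pairing_rootII (i j : 'I_r) : (i < j)%N ->
  exists a : 'I_r, `|\sum_(k < r) rootII i j k * cartanB a k| = 1.
Proof.
move=> ij; exists (inord (if i == 0 :> nat then (j == 1 :> nat) : nat else i.-1)).
rewrite (sum_cartanB (fun k => (i <= k < j)%N%:Z)).
by rewrite /simple_coroot_pairing inordK; case_lia.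
Qed.

Lemma unit_pairing_rootIII (i j : 'I_r) : (i < j)%N ->
  exists a : 'I_r, `|\sum_(k < r) rootIII i j k * cartanB a k| = 1.
Proof.
move=> ij; exists (inord (if i == 0 :> nat then (j == 1 :> nat) : nat else i.-1)).
rewrite (sum_cartanB (fun k => ((i <= k < j)%N + 2 * (j <= k)%N)%N%:Z)).
by rewrite /simple_coroot_pairing inordK; case_lia.
Qed.

End CartanB.

Local Open Scope classical_set_scope.

Lemma image_param2 (I T U V : Type) (P : I -> I -> Prop) (a : I -> I -> T)
    (h : I -> I -> U) (f : T -> V) (g : U -> V) :
  (forall i j, P i j -> f (a i j) = g (h i j)) ->
  f @` [set c | exists i j, P i j /\ c = a i j] = g @` [set u | exists i j, P i j /\ u = h i j].
Proof.
move=> fg; apply/seteqP; split=> _ [_ [i [j [Pij ->]]] <-].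
  by exists (h i j); [exists i, j | rewrite fg].
by exists (a i j); [exists i, j | rewrite fg].
Qed.

Lemma image_param1 (I T U V : Type) (a : I -> T) (h : I -> U) (f : T -> V) (g : U -> V) :
  (forall i, f (a i) = g (h i)) ->
  f @` [set c | exists i, c = a i] = g @` [set u | exists i, u = h i].
Proof.
move=> fg; apply/seteqP; split=> _ [_ [i ->] <-].
  by exists (h i); [exists i | rewrite fg].
by exists (a i); [exists i | rewrite fg].
Qed.

Lemma scaled_intervalE N a b :
  scaled_interval N a b = (fun k : nat => k%:R / N%:R) @` [set k | (a <= k <= b)%N].
Proof. by apply/seteqP; split=> [_ [k [kab ->]] | _ [k kab <-]]; exists k. Qed.

Lemma divr_natD (a b L : nat) : a%:R / L%:R + b%:R / L%:R = (a + b)%:R / L%:R :> rat.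
Proof. by rewrite natrD mulrDl. Qed.

Lemma divr_nat_add1 (a L : nat) : a%:R / L%:R + 1 / L%:R = a.+1%:R / L%:R :> rat.
Proof. by rewrite mulrSr mulrDl. Qed.

Lemma divr_nat_double (a N : nat) : (0 < N)%N -> a%:R / N%:R = (2 * a)%:R / (2 * N)%:R :> rat.
Proof. by move=> N_gt0; rewrite !natrM -mulf_div divff ?mul1r // pnatr_eq0. Qed.

Section OrdinalPairs.
Variable p : nat.
Local Notation r := p.+3.

Lemma ord_pairs_diff :
  [set k | exists i j : 'I_r, (i < j)%N /\ k = (j - i)%N] = [set k | (0 < k < r)%N].
Proof.
apply/seteqP; split=> [_ [i [j [ij ->]]] | k /= k_lt]; first by case_lia.
by exists (inord 0), (inord k); rewrite !inordK; case_lia.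
Qed.

Lemma ord_pairs_sub_sum c : (2 * r <= c + 3)%N ->
  [set k | exists i j : 'I_r, (i < j)%N /\ k = (c - (i + j))%N]
  = [set k | (c + 3 <= k + 2 * r) && (k < c)]%N.
Proof.
move=> cr; apply/seteqP; split=> [_ [i [j [ij ->]]] | k /= k_lt]; first by case_lia.
set s := (c - k)%N; have s_le : (s <= 2 * r - 3)%N by case_lia.
exists (inord (s - minn s r.-1)), (inord (minn s r.-1)); rewrite !inordK; case_lia.
Qed.

Lemma ords_sub : [set k | exists i : 'I_r, k = (r - i)%N] = [set k | (0 < k <= r)%N].
Proof.
apply/seteqP; split=> [_ [i ->] | k /= k_lt]; first by case_lia.
by exists (inord (r - k)); rewrite inordK; case_lia.
Qed.

Lemma ords_double_sub :
  [set k | exists i : 'I_r, k = (2 * (r - i))%N] = [set k | ~~ odd k && (0 < k <= 2 * r)%N].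
Proof.
apply/seteqP; split=> [_ [i ->] | k /= k_lt]; first by case_lia.
by exists (inord (r - k./2)); rewrite inordK; case_lia.
Qed.

Lemma ords_double_sub_pred :
  [set k | exists i : 'I_r, k = (2 * (r - i)).-1] = [set k | odd k && (k < 2 * r)%N].
Proof.
apply/seteqP; split=> [_ [i ->] | k /= k_lt]; first by case_lia.
by exists (inord (r - k.+1./2)); rewrite inordK; case_lia.
Qed.

End OrdinalPairs.

Section RootDatumB.
Variables (p m n : nat) (alpha alphac : 'I_p.+3 -> 'rV[int]_m) (Q : 'rV[int]_m -> int).
Local Notation r := p.+3.
Hypotheses (n_gt0 : (0 < n)%N) (quadQ : is_quadratic_form Q)
  (alpha_alphac : forall i j : 'I_r, dpair (alpha j) (alphac i) = cartanB i j)
  (Q_reflection : forall (i : 'I_r) y, Q (y - dpair (alpha i) y *: alphac i) = Q y).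

Local Notation Q0 := (Q (alphac ord0)).
Local Notation nL := (nalpha n Q (alphac ord0)).
Local Notation nS := (nalpha n Q (alphac ord_max)).

Lemma BQ_simple_coroot k z : BQ Q (alphac k) z = Q (alphac k) * dpair (alpha k) z.
Proof. by apply: BQ_reflection; rewrite ?alpha_alphac ?cartanB_diag. Qed.

(* By symmetry of B_Q, Q(a_i^vee) (a_i, a_i) = Q(a_j^vee) (a_j, a_j) whenever
   a_i, a_j are adjacent, and the Dynkin diagram of B_r is a path. *)
Lemma Q_simple_coroot_len2 k : Q (alphac k) * len2 k = 2 * Q0.
Proof.
have Q_len2_adjacent (i j : 'I_r) : cartanB j i != 0 ->
    Q (alphac i) * len2 i = Q (alphac j) * len2 j.
  move=> cji_neq0; apply: (mulIf cji_neq0).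
  have := BQC Q (alphac i) (alphac j); rewrite !BQ_simple_coroot !alpha_alphac.
  by move=> Qij; rewrite mulrAC Qij -mulrA [cartanB i j * _]mulrC cartanB_sym mulrA.
suff Q_len2_inord k' : (k' < r)%N -> Q (alphac (inord k')) * len2 (inord k' : 'I_r) = 2 * Q0.
  by have := Q_len2_inord k (ltn_ord k); rewrite inord_val.
elim: k' => [_|k' IHk' k'_lt].
  by rewrite (_ : inord 0 = ord0) /len2 /= 1?mulrC //; apply/val_inj/inordK.
have k'_lt' := ltnW k'_lt.
rewrite -IHk' //; symmetry; apply: Q_len2_adjacent.
by rewrite /cartanB -?val_eqE /= !inordK //; case_lia.
Qed.

Lemma Q_simple_coroot k : Q (alphac k) = (if k == r.-1 :> nat then 2 else 1) * Q0.
Proof. by have := Q_simple_coroot_len2 k; rewrite /len2; case_lia. Qed.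

Lemma alphac_neq0 k : alphac k != 0.
Proof. by apply: contra_eq_neq (alpha_alphac k k) => ->; rewrite dpair0 cartanB_diag. Qed.

Lemma ntilde_simple_coroot k : ntilde n Q (alphac k) = nalpha n Q (alphac k).
Proof.
apply: ntilde_divgcd => //; first exact: alphac_neq0.
  by move=> z; rewrite BQ_simple_coroot dvdz_mulr.
have [a cak] := exists_cartanB_N1 k.
by exists (alphac a); rewrite BQ_simple_coroot alpha_alphac cak mulrN1 abszN.
Qed.

(* [d] are the coordinates of beta^vee = 2 beta / (beta, beta); the condition on
   [M] makes B_Q(beta^vee, z) = M <beta, z>, and a simple coroot a^vee with
   <beta, a^vee> = +-1 shows that M is the gcd of the values of B_Q(beta^vee, -). *)
Lemma ntilde_corootY (c d : 'I_r -> int) (M : int) :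
  norm2x2 c != 0 -> (forall k, 2 * c k * len2 k = norm2x2 c * d k) ->
  norm2x2 c * M = 4 * Q0 -> (exists a : 'I_r, `|\sum_(k < r) c k * cartanB a k| = 1) ->
  ntilde n Q (corootY alphac c) = (n %/ gcdn n `|M|)%N.
Proof.
set nu := norm2x2 c => nu_neq0 cd nuM [a unit_a].
have dE k : coroot_coord c k = d k by rewrite /coroot_coord cd mulrC mulzK.
have BQ_corootY z :
    BQ Q (corootY alphac c) z = M * \sum_(k < r) c k * dpair (alpha k) z.
  apply: (mulfI nu_neq0); rewrite mulrA nuM /corootY BQ_suml // !mulr_sumr.
  apply: eq_bigr => k _; rewrite BQZl // BQ_simple_coroot dE.
  transitivity (2 * c k * len2 k * (Q (alphac k) * dpair (alpha k) z)); first by rewrite cd; ring.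
  transitivity (2 * c k * dpair (alpha k) z * (Q (alphac k) * len2 k)); first by ring.
  by rewrite Q_simple_coroot_len2; ring.
have pairing_a : nu * dpair (alpha a) (corootY alphac c)
    = 2 * len2 a * \sum_(k < r) c k * cartanB a k.
  rewrite /corootY dpair_sum !mulr_sumr; apply: eq_bigr => k _.
  rewrite dpairZ alpha_alphac dE.
  transitivity (2 * c k * len2 k * cartanB k a); first by rewrite cd; ring.
  transitivity (2 * c k * (len2 k * cartanB k a)); first by ring.
  by rewrite cartanB_sym; ring.
apply: ntilde_divgcd => //.
- apply/eqP=> c0; move: pairing_a unit_a; set s := \sum_(k < r) _.
  by rewrite c0 dpair0 mulr0 /len2; case_lia.
- by move=> z; rewrite BQ_corootY dvdz_mulr.
- exists (alphac a); rewrite BQ_corootY abszM.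
  under eq_bigr => k _ do rewrite alpha_alphac.
  by move: unit_a; set s := \sum_(k < r) _; lia.
Qed.

Lemma ntilde_corootY_rootI (i : 'I_r) : ntilde n Q (corootY alphac (rootI i)) = nS.
Proof.
rewrite (ntilde_corootY (d := corootIII i) (M := Q (alphac ord_max))) //.
- by rewrite norm2x2_rootI.
- exact: coroot_rootI.
- by rewrite norm2x2_rootI Q_simple_coroot eqxx; lia.
- exact: unit_pairing_rootI.
Qed.

Lemma ntilde_corootY_rootII (i j : 'I_r) : (i < j)%N ->
  ntilde n Q (corootY alphac (rootII i j)) = nL.
Proof.
move=> ij; rewrite (ntilde_corootY (d := corootI i j) (M := Q0)) //.
- by rewrite norm2x2_rootII.
- by move=> k; apply: coroot_rootII.
- by rewrite norm2x2_rootII.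
- exact: unit_pairing_rootII.
Qed.

Lemma ntilde_corootY_rootIII (i j : 'I_r) : (i < j)%N ->
  ntilde n Q (corootY alphac (rootIII i j)) = nL.
Proof.
move=> ij; rewrite (ntilde_corootY (d := corootII i j) (M := Q0)) //.
- by rewrite norm2x2_rootIII.
- by move=> k; apply: coroot_rootIII.
- by rewrite norm2x2_rootIII.
- exact: unit_pairing_rootIII.
Qed.

Lemma fX_split (d : 'I_r -> int) : fX n alphac Q d =
  (\sum_(k < r.-1) d (widen_ord (leqnSn _) k))%:~R / nL%:R + (d ord_max)%:~R / nS%:R.
Proof.
rewrite /fX big_ord_recr /= ntilde_simple_coroot rmorph_sum mulr_suml; congr (_ + _).
apply: eq_bigr => k _; rewrite ntilde_simple_coroot /nalpha Q_simple_coroot /=.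
by rewrite (ltn_eqF (ltn_ord k)) mul1r.
Qed.

Lemma fX_corootI (i j : 'I_r) : (i < j)%N ->
  fX n alphac Q (corootI i j) = (j - i)%:R / nL%:R.
Proof.
move=> ij; rewrite fX_split sum_indicator; last by case_lia.
have -> : corootI i j ord_max = 0 by rewrite /corootI; case_lia.
by rewrite pmulrn mul0r addr0.
Qed.

Lemma fX_corootII (i j : 'I_r) : (i < j)%N ->
  fX n alphac Q (corootII i j) = (j - i + 2 * (r.-1 - j))%:R / nL%:R + 1 / nS%:R.
Proof.
move=> ij; rewrite fX_split.
rewrite (eq_bigr (fun k : 'I_r.-1 =>
    (i <= k < j)%N%:Z + (j <= k < r.-1)%N%:Z + (j <= k < r.-1)%N%:Z));
  last by move=> k _; rewrite /corootII; case_lia.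
rewrite !big_split /= !sum_indicator; try by case_lia.
have -> : corootII i j ord_max = 1 by rewrite /corootII; case_lia.
by rewrite -!PoszD pmulrn; congr (_%:R / _ + _); case_lia.
Qed.

Lemma fX_corootIII (i : 'I_r) :
  fX n alphac Q (corootIII i) = (2 * (r.-1 - i))%:R / nL%:R + 1 / nS%:R.
Proof.
rewrite fX_split.
rewrite (eq_bigr (fun k : 'I_r.-1 => (i <= k < r.-1)%N%:Z + (i <= k < r.-1)%N%:Z));
  last by move=> k _; rewrite /corootIII; case_lia.
rewrite big_split /= !sum_indicator; try by case_lia.
have -> : corootIII i ord_max = 1 by rewrite /corootIII; case_lia.
by rewrite -!PoszD pmulrn; congr (_%:R / _ + _); case_lia.
Qed.

Lemma fY_rootI (i : 'I_r) : fY n alphac Q (rootI i) = (r - i)%:R / nS%:R.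
Proof.
rewrite /fY ntilde_corootY_rootI (eq_bigr (fun k : 'I_r => (i <= k < r)%N%:Z));
  last by move=> k _; rewrite /rootI; case_lia.
by rewrite sum_indicator ?pmulrn //; case_lia.
Qed.

Lemma fY_rootII (i j : 'I_r) : (i < j)%N ->
  fY n alphac Q (rootII i j) = (j - i)%:R / nL%:R.
Proof.
move=> ij; rewrite /fY ntilde_corootY_rootII // sum_indicator; last by case_lia.
by rewrite pmulrn.
Qed.

Lemma fY_rootIII (i j : 'I_r) : (i < j)%N ->
  fY n alphac Q (rootIII i j) = (j - i + 2 * (r - j))%:R / nL%:R.
Proof.
move=> ij; rewrite /fY ntilde_corootY_rootIII //.
rewrite (eq_bigr (fun k : 'I_r =>
    (i <= k < j)%N%:Z + (j <= k < r)%N%:Z + (j <= k < r)%N%:Z));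
  last by move=> k _; rewrite /rootIII; case_lia.
rewrite !big_split /= !sum_indicator; try by case_lia.
by rewrite -!PoszD pmulrn; congr (_%:R / _); case_lia.
Qed.

Lemma images_long_twice_short N :
  (forall i : 'I_r, (i < r.-1)%N -> nalpha n Q (alphac i) = (2 * N)%N) ->
  (forall i : 'I_r, (i = r.-1 :> nat) -> nalpha n Q (alphac i) = N) ->
  [/\ fX n alphac Q @` PhicI r = fY n alphac Q @` PhiII r,
      fX n alphac Q @` PhicII r = fY n alphac Q @` PhiIII r,
      fX n alphac Q @` PhicIII r = fY n alphac Q @` PhiI r,
      fX n alphac Q @` PhicPos r = scaled_interval (2 * N) 1 (2 * r) &
      fY n alphac Q @` PhiPos r = scaled_interval (2 * N) 1 (2 * r)].
Proof.
move=> long short; have nLE : nL = (2 * N)%N by apply: long.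
have nSE : nS = N by apply: short.
have N_gt0 : (0 < N)%N by rewrite -nSE divn_gcdn_gt0.
set sc := fun k : nat => k%:R / (2 * N)%:R : rat.
have XI : fX n alphac Q @` PhicI r = sc @` [set k | (0 < k < r)%N].
  by rewrite -ord_pairs_diff; apply: image_param2 => i j ij; rewrite fX_corootI // nLE.
have YII : fY n alphac Q @` PhiII r = sc @` [set k | (0 < k < r)%N].
  by rewrite -ord_pairs_diff; apply: image_param2 => i j ij; rewrite fY_rootII // nLE.
have XII : fX n alphac Q @` PhicII r = sc @` [set k | (2 * r + 3 <= k + 2 * r) && (k < 2 * r)]%N.
  rewrite -ord_pairs_sub_sum ?leq_addr //; apply: image_param2 => i j ij.
  rewrite fX_corootII // nLE nSE (divr_nat_double 1) // divr_natD.
  by congr (_%:R / _); case_lia.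
have YIII : fY n alphac Q @` PhiIII r = sc @` [set k | (2 * r + 3 <= k + 2 * r) && (k < 2 * r)]%N.
  rewrite -ord_pairs_sub_sum ?leq_addr //; apply: image_param2 => i j ij.
  by rewrite fY_rootIII // nLE; congr (_%:R / _); case_lia.
have XIII : fX n alphac Q @` PhicIII r = sc @` [set k | ~~ odd k && (0 < k <= 2 * r)%N].
  rewrite -ords_double_sub; apply: image_param1 => i.
  rewrite fX_corootIII nLE nSE (divr_nat_double 1) // divr_natD.
  by congr (_%:R / _); case_lia.
have YI : fY n alphac Q @` PhiI r = sc @` [set k | ~~ odd k && (0 < k <= 2 * r)%N].
  by rewrite -ords_double_sub; apply: image_param1 => i; rewrite fY_rootI nSE divr_nat_double.
split; rewrite ?XI ?YII ?XII ?YIII ?XIII ?YI // scaled_intervalE.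
- rewrite /PhicPos !image_setU XI XII XIII -!image_setU.
  by congr (_ @` _); apply/seteqP; split=> k /=; lia.
- rewrite /PhiPos !image_setU YI YII YIII -!image_setU.
  by congr (_ @` _); apply/seteqP; split=> k /=; lia.
Qed.

Lemma images_long_eq_short N :
  (forall i : 'I_r, nalpha n Q (alphac i) = N) ->
  fX n alphac Q @` PhicPos r = scaled_interval N 1 (2 * r - 1) /\
  fY n alphac Q @` PhiPos r = scaled_interval N 1 (2 * r - 1).
Proof.
move=> nalphaE; have nLE := nalphaE ord0; have nSE := nalphaE ord_max.
set sc := fun k : nat => k%:R / N%:R : rat.
have XI : fX n alphac Q @` PhicI r = sc @` [set k | (0 < k < r)%N].
  by rewrite -ord_pairs_diff; apply: image_param2 => i j ij; rewrite fX_corootI // nLE.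
have YII : fY n alphac Q @` PhiII r = sc @` [set k | (0 < k < r)%N].
  by rewrite -ord_pairs_diff; apply: image_param2 => i j ij; rewrite fY_rootII // nLE.
have XII : fX n alphac Q @` PhicII r
    = sc @` [set k | (2 * r - 1 + 3 <= k + 2 * r) && (k < 2 * r - 1)]%N.
  rewrite -ord_pairs_sub_sum; last by lia.
  apply: image_param2 => i j ij; rewrite fX_corootII // nLE nSE divr_nat_add1.
  by congr (_%:R / _); case_lia.
have YIII : fY n alphac Q @` PhiIII r = sc @` [set k | (2 * r + 3 <= k + 2 * r) && (k < 2 * r)]%N.
  rewrite -ord_pairs_sub_sum ?leq_addr //; apply: image_param2 => i j ij.
  by rewrite fY_rootIII // nLE; congr (_%:R / _); case_lia.
have XIII : fX n alphac Q @` PhicIII r = sc @` [set k | odd k && (k < 2 * r)%N].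
  rewrite -ords_double_sub_pred; apply: image_param1 => i.
  by rewrite fX_corootIII nLE nSE divr_nat_add1; congr (_%:R / _); case_lia.
have YI : fY n alphac Q @` PhiI r = sc @` [set k | (0 < k <= r)%N].
  by rewrite -ords_sub; apply: image_param1 => i; rewrite fY_rootI nSE.
rewrite !scaled_intervalE /PhicPos /PhiPos !image_setU XI XII XIII YI YII YIII -!image_setU.
by split; congr (_ @` _); apply/seteqP; split=> k /=; lia.
Qed.

End RootDatumB.

Theorem lemma3p2 (r m n : nat) (alpha alphac : 'I_r -> 'rV[int]_m)
  (Q : 'rV[int]_m -> int) :
  (3 <= r)%N -> (0 < n)%N ->
  (forall i j : 'I_r, dpair (alpha j) (alphac i) = cartanB i j) ->
  is_quadratic_form Q ->
  (forall (i : 'I_r) (y : 'rV[int]_m),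
      Q (y - dpair (alpha i) y *: alphac i) = Q y) ->
  (forall N : nat,
     (forall i : 'I_r, (i < r.-1)%N -> nalpha n Q (alphac i) = (2 * N)%N) ->
     (forall i : 'I_r, (i = r.-1 :> nat) -> nalpha n Q (alphac i) = N) ->
     [/\ fX n alphac Q @` PhicI r = fY n alphac Q @` PhiII r,
         fX n alphac Q @` PhicII r = fY n alphac Q @` PhiIII r,
         fX n alphac Q @` PhicIII r = fY n alphac Q @` PhiI r,
         fX n alphac Q @` PhicPos r = scaled_interval (2 * N) 1 (2 * r) &
         fY n alphac Q @` PhiPos r = scaled_interval (2 * N) 1 (2 * r)]) /\
  (forall N : nat,
     (forall i : 'I_r, nalpha n Q (alphac i) = N) ->
     fX n alphac Q @` PhicPos r = scaled_interval N 1 (2 * r - 1) /\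
     fY n alphac Q @` PhiPos r = scaled_interval N 1 (2 * r - 1)).
Proof.
case: r alpha alphac => [|[|[|p]]] // alpha alphac _ n_gt0 alpha_alphac quadQ Q_reflection.
split=> N.
- exact: images_long_twice_short.
- exact: images_long_eq_short.
Qed.
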